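(* Let $g:\mathbb{Z}_{\ge0}\to\mathbb{R}$ satisfy $g(0)>0$ and $g(k)\le 0$ for all $k\ge1$ (an opponent process with $\tau_0=1$). Let $y_{\min}\in\mathbb{R}$, let gains satisfy $0<K_+\le g(0)^{-1}\le K_-$, and let $\delta>0$. Let $(y^{\mathrm{nat}}_t)_{t\ge0}$ be a real sequence and $u_0\ge0$ an initial dose such that $y_1:=g(0)u_0+y^{\mathrm{nat}}_1\ge y_{\min}$, and suppose $$y^{\mathrm{nat}}_{t+1}\ge y^{\mathrm{nat}}_t-g(t)\,u_0+\frac{\delta}{t}\qquad\text{for all }t\ge1.$$ For $t\ge1$ define $$u_t=\max\bigl\{0,\ u_{t-1}-K_+(y_t-y_{\min})_+-K_-(y_t-y_{\min})_-\bigr\},\qquad y_{t+1}=\sum_{k=0}^{t}g(k)\,u_{t-k}+y^{\mathrm{nat}}_{t+1},$$ where $(x)_+=\max(x,0)$, $(x)_-=\min(x,0)$. Then: (i) $u_t\le u_{t-1}$ for all $t\ge1$; (ii) $y_t\ge y_{\min}$ for all $t\ge1$; (iii) there exists a finite $T_0$ such that $u_t=0$ for all $t\ge T_0$.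
   Context: An opponent process with switching time $\tau_0=1$ is an impulse response $g$ with $g(0)>0$ and $g(\tau)\le0$ for all $\tau\ge1$. Doses are nonnegative. *)

From mathcomp Require Import all_boot all_order all_algebra.
From mathcomp Require Import reals.
Set Implicit Arguments. Unset Strict Implicit. Unset Printing Implicit Defensive.
Import Order.TTheory GRing.Theory Num.Theory.
Local Open Scope ring_scope.

Definition pospart {R : realType} (x : R) : R := Num.max x 0.
Definition negpart {R : realType} (x : R) : R := Num.min x 0.

Definition opponent_process {R : realType} (g : nat -> R) : Prop :=
  0 < g 0%N /\ forall k : nat, (1 <= k)%N -> g k <= 0.

From mathcomp Require Import all_boot all_order all_algebra.
From mathcomp Require Import reals ring lra.
From mathcomp Require Import boolp sequences.
Import Order.TTheory GRing.Theory Num.Theory.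
Local Open Scope ring_scope.

(* As long as the doses are nonincreasing, the tail of the convolution can
   only push the output up (g(k) <= 0 for k >= 1), so
   y_{t+1} >= y_t + g(0) (u_t - u_{t-1}) + delta / t.  While y_t >= ymin only
   the gain Kp acts, and g(0) Kp <= 1 means the dose cut it prescribes lowers
   the output by at most y_t - ymin; hence y_{t+1} >= ymin + delta / t and the
   doses keep decreasing.  While the dose stays positive, each step removes
   Kp (y_t - ymin) >= Kp delta / (t - 1), so u_0 would have to exceed
   Kp delta times a partial harmonic sum, which is impossible in the long run. *)

Lemma series_harmonic_unbounded {R : realType} (c : R) :
  exists n, c < series (@harmonic R) n.
Proof.
apply: contrapT => /forallNP bounded; apply: (@dvg_harmonic R).
apply: nondecreasing_is_cvgn.
  by apply: nondecreasing_series => n _ _; exact: harmonic_ge0.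
by exists c => _ [n _ <-]; rewrite leNgt; apply/negP/bounded.
Qed.

Lemma conv_increment_ge (R : numDomainType) (g u : nat -> R) (s : nat) :
  (forall k, (1 <= k)%N -> g k <= 0) ->
  (forall j, (1 <= j <= s)%N -> u j <= u j.-1) ->
  g 0%N * (u s.+1 - u s) + g s.+1 * u 0%N <=
  \sum_(0 <= k < s.+2) g k * u (s.+1 - k)%N
  - \sum_(0 <= k < s.+1) g k * u (s - k)%N.
Proof.
move=> g_le0 u_mono.
have -> : \sum_(0 <= k < s.+2) g k * u (s.+1 - k)%N
          - \sum_(0 <= k < s.+1) g k * u (s - k)%N =
    g 0%N * (u s.+1 - u s) + g s.+1 * u 0%N
    + \sum_(0 <= k < s) g k.+1 * (u (s - k)%N - u (s - k.+1)%N).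
  rewrite big_nat_recl // big_nat_recr //=.
  rewrite [X in _ - X]big_nat_recl // !subn0 subnn.
  under eq_bigr do rewrite subSS.
  under [in RHS]eq_bigr do rewrite mulrBr.
  by rewrite sumrB; ring.
rewrite lerDl big_nat_cond; apply: sumr_ge0 => k /andP[/andP[_ k_lt_s] _].
apply: mulr_le0; first exact: g_le0.
by rewrite subr_le0 subnS u_mono // subn_gt0 k_lt_s leq_subr.
Qed.

Section OpponentProcessControl.
Context {R : realType} {g : nat -> R} {ymin Kp Km delta : R}
  {ynat u y : nat -> R}.
Hypotheses (g_opp : opponent_process g) (Kp_gt0 : 0 < Kp)
  (Kp_le : Kp <= (g 0%N)^-1) (delta_gt0 : 0 < delta) (u0_ge0 : 0 <= u 0%N)
  (y1_ge : ymin <= g 0%N * u 0%N + ynat 1%N).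
Hypothesis ynat_succ_ge : forall t : nat, (1 <= t)%N ->
  ynat t - g t * u 0%N + delta / t%:R <= ynat t.+1.
Hypothesis u_rec : forall t : nat, (1 <= t)%N ->
  u t = Num.max 0 (u t.-1 - Kp * pospart (y t - ymin)
                           - Km * negpart (y t - ymin)).
Hypothesis y_conv : forall t : nat,
  y t.+1 = \sum_(0 <= k < t.+1) g k * u (t - k)%N + ynat t.+1.

Lemma g0_Kp_le1 : g 0%N * Kp <= 1.
Proof. by rewrite -(mulfV (lt0r_neq0 g_opp.1)) ler_pM2l ?g_opp.1. Qed.

Lemma u_ge0 t : 0 <= u t.
Proof. by case: t => // t; rewrite u_rec // le_max lexx. Qed.

Lemma u_rec_above t : (1 <= t)%N -> ymin <= y t ->
  u t = Num.max 0 (u t.-1 - Kp * (y t - ymin)).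
Proof.
move=> t_ge1; rewrite -subr_ge0 => e_ge0.
by rewrite u_rec // /pospart /negpart (max_l e_ge0) (min_r e_ge0) mulr0 subr0.
Qed.

Lemma y_increment_ge s : (forall j, (1 <= j <= s)%N -> u j <= u j.-1) ->
  y s.+1 + g 0%N * (u s.+1 - u s) + delta / s.+1%:R <= y s.+2.
Proof.
move=> u_mono; have := conv_increment_ge _ _ _ _ g_opp.2 u_mono.
have := ynat_succ_ge s.+1 isT.
rewrite !y_conv; set du := g 0%N * _; set c := g s.+1 * _; set d := delta / _.
lra.
Qed.

Lemma dose_step s : (forall j, (1 <= j <= s)%N -> u j <= u j.-1) ->
  ymin <= y s.+1 -> u s.+1 <= u s /\ ymin + delta / s.+1%:R <= y s.+2.
Proof.
move=> u_mono y_ge; have u_succ := u_rec_above s.+1 isT y_ge.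
set e := y s.+1 - ymin in u_succ.
have e_ge0 : 0 <= e by rewrite /e subr_ge0.
have Kpe_ge0 : 0 <= Kp * e by rewrite mulr_ge0 // ltW.
have u_lb : u s - Kp * e <= u s.+1 by rewrite u_succ le_max lexx orbT.
split; first by rewrite u_succ ge_max u_ge0 /=; lra.
have drop_ge : - e <= g 0%N * (u s.+1 - u s).
  apply: le_trans (_ : - (g 0%N * Kp * e) <= _).
    by rewrite lerN2 ler_piMl // g0_Kp_le1.
  by rewrite -mulrA -mulrN ler_pM2l ?g_opp.1 //; lra.
have := y_increment_ge s u_mono; rewrite /e in drop_ge.
set du := g 0%N * _ in drop_ge *; set d := delta / _; lra.
Qed.

Lemma u_nonincr_ymin_le n :
  (forall j, (1 <= j <= n)%N -> u j <= u j.-1) /\ ymin <= y n.+1.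
Proof.
elim: n => [|n [u_mono y_ge]].
  split=> [j /andP[j_ge1 /(leq_trans j_ge1)] //|].
  by rewrite y_conv big_nat1 subnn.
have [u_le y_lb] := dose_step n u_mono y_ge.
split.
  move=> j /andP[j_ge1]; rewrite leq_eqVlt ltnS => /orP[/eqP -> //|j_le].
  by apply: u_mono; rewrite j_ge1.
by apply: le_trans y_lb; rewrite lerDl divr_ge0 // ltW.
Qed.

Lemma u_nonincr t : (1 <= t)%N -> u t <= u t.-1.
Proof. by move=> t_ge1; apply: (u_nonincr_ymin_le t).1; rewrite t_ge1 leqnn. Qed.

Lemma ymin_le_y t : (1 <= t)%N -> ymin <= y t.
Proof. by case: t => // t _; exact: (u_nonincr_ymin_le t).2. Qed.

Lemma ymin_delta_le_y s : ymin + delta / s.+1%:R <= y s.+2.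
Proof.
have [u_mono y_ge] := u_nonincr_ymin_le s.
by case: (dose_step s u_mono y_ge).
Qed.

Lemma u_antitone s t : (s <= t)%N -> u t <= u s.
Proof.
by apply: Order.NatMonotonyTheory.nonincnP => i; exact: (u_nonincr i.+1 isT).
Qed.

(* [series harmonic n] is the sum of 1/(k+1) for k < n, hence the shift t.-1. *)
Lemma harmonic_le_dose_drop t : 0 < u t ->
  Kp * delta * series (@harmonic R) t.-1 <= u 0%N - u t.
Proof.
elim: t => [|t IH] u_gt0; first by rewrite /series /= big_geq // mulr0 subrr.
have u_succ : u t.+1 = u t - Kp * (y t.+1 - ymin).
  move: u_gt0; rewrite (u_rec_above t.+1 isT (ymin_le_y t.+1 isT)) /=.
  by rewrite lt_max ltxx /= => /ltW/max_r.
have := IH (lt_le_trans u_gt0 (u_nonincr t.+1 isT)).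
case: t u_succ {IH u_gt0} => [|s] u_succ IH.
  by rewrite /series /= big_geq // mulr0 subr_ge0 (u_nonincr 1 isT).
rewrite /= seriesSr /= mulrDr u_succ.
have : Kp * delta * s.+1%:R^-1 <= Kp * (y s.+2 - ymin).
  by rewrite -mulrA ler_pM2l // lerBrDr addrC ymin_delta_le_y.
move: IH => /=.
move: (Kp * delta * _) (Kp * delta / _) (Kp * (y s.+2 - ymin)) => A B C; lra.
Qed.

Lemma u_eventually0 : exists T0, forall t, (T0 <= t)%N -> u t = 0.
Proof.
have KpD_gt0 : 0 < Kp * delta by rewrite mulr_gt0.
have [N HN] := series_harmonic_unbounded (u 0%N / (Kp * delta)).
have uN0 : u N.+1 = 0.
  apply/eqP; rewrite eq_le u_ge0 andbT leNgt; apply/negP => uN_gt0.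
  move: HN (harmonic_le_dose_drop N.+1 uN_gt0).
  rewrite ltr_pdivrMr // mulrC /=; move: (Kp * delta * _) => A; lra.
exists N.+1 => t le_t.
by apply/eqP; rewrite eq_le u_ge0 andbT -uN0 (u_antitone _ _ le_t).
Qed.

End OpponentProcessControl.

Theorem proposition2 (R : realType) (g : nat -> R) (ymin Kp Km delta : R)
    (ynat u y : nat -> R) :
  opponent_process g ->
  0 < Kp -> Kp <= (g 0%N)^-1 -> (g 0%N)^-1 <= Km ->
  0 < delta ->
  0 <= u 0%N ->
  (* y_1 := g(0) u_0 + ynat_1 >= ymin *)
  ymin <= g 0%N * u 0%N + ynat 1%N ->
  (forall t : nat, (1 <= t)%N ->
     ynat t - g t * u 0%N + delta / t%:R <= ynat t.+1) ->
  (* recursion defining u_t for t >= 1 *)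
  (forall t : nat, (1 <= t)%N ->
     u t = Num.max 0 (u t.-1 - Kp * pospart (y t - ymin)
                              - Km * negpart (y t - ymin))) ->
  (* y_{t+1} = sum_{k=0}^t g(k) u_{t-k} + ynat_{t+1}, for t >= 0
     (at t = 0 this is y_1 = g(0) u_0 + ynat_1) *)
  (forall t : nat,
     y t.+1 = \sum_(0 <= k < t.+1) g k * u (t - k)%N + ynat t.+1) ->
  (forall t : nat, (1 <= t)%N -> u t <= u t.-1) /\
  (forall t : nat, (1 <= t)%N -> ymin <= y t) /\
  (exists T0 : nat, forall t : nat, (T0 <= t)%N -> u t = 0).
Proof.
move=> g_opp Kp_gt0 Kp_le _ delta_gt0 u0_ge0 y1_ge ynat_succ_ge u_rec y_conv.
split; first exact: (u_nonincr g_opp Kp_gt0 Kp_le delta_gt0 u0_ge0 y1_ge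
                              ynat_succ_ge u_rec y_conv).
split; first exact: (ymin_le_y g_opp Kp_gt0 Kp_le delta_gt0 u0_ge0 y1_ge
                              ynat_succ_ge u_rec y_conv).
exact: (u_eventually0 g_opp Kp_gt0 Kp_le delta_gt0 u0_ge0 y1_ge
                      ynat_succ_ge u_rec y_conv).
Qed.
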